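(* If $R$ is a saturated transfer system on a finite modular lattice $M$, then the set $R_{cov}$ of covering relations of $M$ contained in $R$ is a saturated cover.
   Context: A lattice $M$ is modular if $a\le b$ implies $a\vee(x\wedge b)=(a\vee x)\wedge b$. A transfer system on a finite lattice $(P,\le)$ is a partial order $R$ refining $\le$ closed under restriction: $x\,R\,z$ and $y\le z$ imply $(x\wedge y)\,R\,y$; it is saturated if $x\,R\,y$, $y\le z$ and $x\,R\,z$ imply $y\,R\,z$. A covering diamond is a quadruple $x,y,x\wedge y,x\vee y$ with $x\ne y$ such that $x\vee y$ covers $x$ and $y$ and both $x,y$ cover $x\wedge y$. A saturated cover on $M$ is a set $Q$ of covering relations of $M$ such that (1) for all $x,y$, if $x\,Q\,(x\vee y)$ then $(x\wedge y)\,Q\,y$; (2) for every covering diamond, if three of its four covering relations lie in $Q$, so does the fourth. *)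

From HB Require Import structures.
From mathcomp Require Import all_boot all_order.
Set Implicit Arguments. Unset Strict Implicit. Unset Printing Implicit Defensive.
Import Order.Theory.
Local Open Scope order_scope.

Definition modular_lattice d (M : latticeType d) : Prop :=
  forall a b x : M, a <= b -> a `|` (x `&` b) = (a `|` x) `&` b.

Definition covers d (M : porderType d) (x y : M) : Prop :=
  x < y /\ ~ (exists z : M, x < z /\ z < y).

Definition transfer_system d (P : latticeType d) (R : P -> P -> Prop) : Prop :=
  [/\ (forall x, R x x),
      (forall x y, R x y -> R y x -> x = y),
      (forall x y z, R x y -> R y z -> R x z),
      (forall x y, R x y -> x <= y) &
      (forall x y z, R x z -> y <= z -> R (x `&` y) y)].

Definition saturated d (P : latticeType d) (R : P -> P -> Prop) : Prop :=
  forall x y z, R x y -> y <= z -> R x z -> R y z.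

Definition covering_diamond d (M : latticeType d) (x y : M) : Prop :=
  [/\ x != y, covers x (x `|` y), covers y (x `|` y),
      covers (x `&` y) x & covers (x `&` y) y].

Definition saturated_cover d (M : latticeType d) (Q : M -> M -> Prop) : Prop :=
  [/\ (forall x y, Q x y -> covers x y),
      (forall x y, Q x (x `|` y) -> Q (x `&` y) y) &
      (forall x y, covering_diamond x y ->
         let a := Q (x `&` y) x in let b := Q (x `&` y) y in
         let c := Q x (x `|` y) in let e := Q y (x `|` y) in
         (b -> c -> e -> a) /\ (a -> c -> e -> b) /\
         (a -> b -> e -> c) /\ (a -> b -> c -> e))].

Definition Rcov d (M : latticeType d) (R : M -> M -> Prop) : M -> M -> Prop :=
  fun x y => covers x y /\ R x y.

From mathcomp Require Import all_boot all_order.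
Set Implicit Arguments. Unset Strict Implicit. Unset Printing Implicit Defensive.
Import Order.Theory.
Local Open Scope order_scope.

(* In a modular lattice z |-> x `|` z is injective on the interval
   [x `&` y, y] (the diamond isomorphism), so if x `|` y covers x then y
   covers x `&` y, and restriction in the transfer system carries R along.
   In a covering diamond, restriction gives the two lower edges from the
   upper ones, and saturation plus transitivity give the upper edges from
   the lower ones. *)

Section ModularCovers.
Variables (d : Order.disp_t) (M : latticeType d).
Hypothesis M_modular : modular_lattice M.

Lemma modular_joinIK (x y z : M) : z <= y -> x `&` y <= z -> (x `|` z) `&` y = z.
Proof. by move=> zy xyz; rewrite joinC -M_modular // (join_l xyz). Qed.

Lemma modular_join_inj (x y z : M) :
  z <= y -> x `&` y <= z -> x `|` z = x `|` y -> z = y.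
Proof.
move=> zy xyz Exz; rewrite -(modular_joinIK zy xyz) Exz.
by rewrite meet_r // leUr.
Qed.

Lemma covers_meet_of_covers_join (x y : M) :
  covers x (x `|` y) -> covers (x `&` y) y.
Proof.
move=> [x_lt_xy no_between]; split.
  rewrite lt_neqAle leIr andbT; apply: contraTneq x_lt_xy => Exy.
  by rewrite join_l ?ltxx // -Exy leIl.
move=> [z [xy_lt_z z_lt_y]].
have x_lt_xz : x < x `|` z.
  rewrite lt_neqAle leUl andbT eq_sym; apply: contraTneq xy_lt_z => Exz.
  by rewrite le_gtF // lexI (ltW z_lt_y) andbT -Exz leUr.
have xz_lt_xy : x `|` z < x `|` y.
  rewrite lt_neqAle leUx leUl (le_trans (ltW z_lt_y) (leUr _ _)) !andbT.
  apply: (contraTneq _ z_lt_y) => Exz.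
  by rewrite (modular_join_inj (ltW z_lt_y) (ltW xy_lt_z) Exz) ltxx.
by apply: no_between; exists (x `|` z).
Qed.

End ModularCovers.

Section TransferCovers.
Variables (d : Order.disp_t) (M : latticeType d) (R : M -> M -> Prop).
Hypothesis R_transfer : transfer_system R.

Lemma transfer_restrict_join (x y : M) : R x (x `|` y) -> R (x `&` y) y.
Proof. by case: R_transfer => _ _ _ _ restrict /restrict; apply; rewrite leUr. Qed.

Lemma transfer_trans (x y z : M) : R x y -> R y z -> R x z.
Proof. by case: R_transfer => _ _ trans _ _; apply: trans. Qed.

Lemma Rcov_restrict_join (x y : M) :
  covers (x `&` y) y -> Rcov R x (x `|` y) -> Rcov R (x `&` y) y.
Proof. by move=> cov [_ /transfer_restrict_join]. Qed.

Hypothesis R_saturated : saturated R.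

Lemma Rcov_saturate_join (x y : M) :
  covers x (x `|` y) -> Rcov R (x `&` y) x -> Rcov R (x `&` y) y ->
  Rcov R y (x `|` y) -> Rcov R x (x `|` y).
Proof.
move=> cov [_ Rx] [_ Ry] [_ Ryxy]; split=> //.
exact: R_saturated Rx (leUl x y) (transfer_trans Ry Ryxy).
Qed.

End TransferCovers.

Theorem proposition3p6 (d : Order.disp_t) (M : finLatticeType d)
  (R : M -> M -> Prop) :
  modular_lattice M -> transfer_system R -> saturated R ->
  saturated_cover (Rcov R).
Proof.
move=> M_modular R_transfer R_saturated; split.
- by move=> x y [].
- move=> x y Rxy; apply: (Rcov_restrict_join R_transfer) (Rxy).
  by case: Rxy => /(covers_meet_of_covers_join M_modular).
- move=> x y [_ cov_x cov_y cov_mx cov_my] /=.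
  have restrict_yx := Rcov_restrict_join R_transfer (x := y) (y := x).
  have saturate_yx := Rcov_saturate_join R_transfer R_saturated (x := y) (y := x).
  rewrite meetC joinC in restrict_yx saturate_yx.
  split; [|split; [|split]] => Ha Hb Hc.
  + exact: restrict_yx.
  + exact: Rcov_restrict_join.
  + exact: Rcov_saturate_join.
  + exact: saturate_yx.
Qed.
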